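(* Let $t\ge 2$ be an even integer and let $p\ge 3$ be a prime with $(t-1)\mid(p-1)$; write $p-1=a(t-1)$ (so $a$ is even). Let $g$ be a primitive root of $\mathbb{F}_p$ (a generator of $\mathbb{F}_p^*$), and set $B=\{g,g^2,\dots,g^{a/2}\}\subseteq\mathbb{F}_p^*$ and $W=\{a,2a,\dots,(t-1)a\}\subseteq\mathbb{Z}$. For $f\in\mathbb{F}_p^*$ define $$P_f=\{(w,b)\in W\times B : g^w b=f\},\qquad N_f=\{(w,b)\in W\times B : g^w b=-f\}.$$ Then for every $f\in\mathbb{F}_p^*$ we have $\{|P_f|,|N_f|\}=\{0,1\}$; in particular each of $P_f$ and $N_f$ has at most one element.
   Context: $\mathbb{F}_p$ is the field with $p$ elements and $\mathbb{F}_p^*$ its multiplicative group. *)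

From mathcomp Require Import all_boot all_order all_algebra.
Set Implicit Arguments. Unset Strict Implicit. Unset Printing Implicit Defensive.
Import GRing.Theory.
Local Open Scope ring_scope.

Definition Wset (a t : nat) : seq nat := [seq (a * i)%N | i <- iota 1 t.-1].

Definition Bset (p : nat) (g : 'F_p) (a : nat) : seq 'F_p :=
  undup [seq g ^+ j | j <- iota 1 a./2].

(* P_f (resp. N_f when called with -f): pairs (w,b) in W x B with g^w b = f *)
Definition Pset (p : nat) (g : 'F_p) (a t : nat) (f : 'F_p) : seq (nat * 'F_p) :=
  undup [seq wb <- [seq (w, b) | w <- Wset a t, b <- Bset g a] | g ^+ wb.1 * wb.2 == f].

From mathcomp Require Import all_boot all_order all_algebra.
From mathcomp Require Import finfield zify.
Import GRing.Theory.

(* Write the elements of F_p^* as powers g^x, with x taken modulo p - 1 = a(t-1).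
   The products g^w b have exponents a*i + j with 1 <= i <= t-1 and 1 <= j <= a/2;
   read as mixed-radix digits, these hit a residue x at most once, and exactly when
   x mod a lies in [1, a/2].  Since t - 1 is odd, -1 = g^((p-1)/2) with
   (p-1)/2 = a(t-2)/2 + a/2, so replacing f by -f shifts x mod a by a/2, which
   exchanges [1, a/2] with its complement. *)

Definition low_residue (a x : nat) : bool := (0 < x %% a <= a./2)%N.

Lemma low_residue_shift (a m x : nat) : ~~ odd a -> (0 < a)%N ->
  low_residue a (x + (a * m + a./2)) = ~~ low_residue a x.
Proof.
move=> a_even a_gt0; rewrite /low_residue.
have -> : (x + (a * m + a./2)) %% a = (x %% a + a./2) %% a.
  by rewrite modnDml addnCA mulnC modnMDl.
have := even_halfK a_even; have : (x %% a < a)%N by rewrite ltn_mod.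
move: (x %% a) (a./2) => r h r_lt_a a_eq.
have [r_lt_h | h_le_r] := ltnP r h.
- by rewrite modn_small; lia.
- by rewrite -(subnK h_le_r) -addnA addnn a_eq modnDr modn_small; lia.
Qed.

Lemma half_mul_even_odd (a T : nat) : ~~ odd a -> odd T -> (a * T)./2 = a * T./2 + a./2.
Proof.
move=> /even_halfK a_eq T_odd; rewrite -{1}(odd_double_half T) T_odd.
move: (a./2) (T./2) a_eq => h m <-.
by rewrite -!mul2n -mulnA mul2n doubleK; lia.
Qed.

Lemma eqn_mod_digits (a T i j i' j' : nat) : (0 < a)%N -> (j < a)%N -> (j' < a)%N ->
  (a * i + j == a * i' + j' %[mod a * T]) = (j == j') && (i == i' %[mod T]).
Proof.
move=> a_gt0 j_lt_a j'_lt_a.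
apply/idP/andP => [/eqP eq_ij | [/eqP <- eq_i]]; last first.
  by rewrite eqn_modDr -!muln_modr (eqP eq_i).
have j_eq : j = j'.
  have modaT y : y %% (a * T) %% a = y %% a by apply/modn_dvdm/dvdn_mulr.
  move/(congr1 (modn^~ a)): eq_ij.
  by rewrite !modaT !(mulnC a) !modnMDl !modn_small.
by move: eq_ij; rewrite j_eq => /eqP; rewrite eqn_modDr -!muln_modr eqn_pmul2l.
Qed.

Lemma exists_mod_rep (T Q : nat) : (0 < T)%N ->
  exists2 i, (0 < i <= T)%N & i = Q %[mod T].
Proof.
move=> T_gt0; exists ((Q + T.-1) %% T).+1; first by rewrite ltn_mod.
by rewrite -addn1 modnDml -addnA addn1 prednK // modnDr.
Qed.

Lemma eq_mod_rep (T i i' : nat) : (0 < i <= T)%N -> (0 < i' <= T)%N ->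
  i = i' %[mod T] -> i = i'.
Proof.
move=> /andP [i_gt0 i_le] /andP [i'_gt0 i'_le] /eqP.
by rewrite -[i](subnK i_gt0) -[i'](subnK i'_gt0) eqn_modDr !modn_small; lia.
Qed.

Lemma mem_Wset (a t w : nat) :
  reflect (exists2 i, (0 < i <= t.-1)%N & w = (a * i)%N) (w \in Wset a t).
Proof.
apply: (iffP mapP) => [] [i i_range ->]; exists i => //;
  by move: i_range; rewrite mem_iota add1n ltnS.
Qed.

Local Open Scope ring_scope.

Lemma mem_Bset (p : nat) (g : 'F_p) (a : nat) (b : 'F_p) :
  reflect (exists2 j, (0 < j <= a./2)%N & b = g ^+ j) (b \in Bset g a).
Proof.
rewrite mem_undup; apply: (iffP mapP) => [] [j j_range ->]; exists j => //;
  by move: j_range; rewrite mem_iota add1n ltnS.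
Qed.

Lemma mem_Pset (p : nat) (g : 'F_p) (a t : nat) (f : 'F_p) w b :
  ((w, b) \in Pset g a t f) =
  [&& w \in Wset a t, b \in Bset g a & g ^+ w * b == f].
Proof.
rewrite /Pset mem_undup mem_filter /= andbC.
have [_ | _] := eqVneq (g ^+ w * b) f; rewrite ?andbF // !andbT.
by apply/allpairsP/andP => [[[w' b'] [/= ? ? [-> ->]]] | [? ?]] //; exists (w, b).
Qed.

Section PrimitiveRootExponents.

Variables (p a t : nat) (g : 'F_p).
Hypotheses (g_prim : p.-1.-primitive_root g) (p_pred : p.-1 = (a * t.-1)%N).

Lemma mem_Pset_expr (x w : nat) (b : 'F_p) :
  (w, b) \in Pset g a t (g ^+ x) <->
  exists i j, [/\ (0 < i <= t.-1)%N, (0 < j <= a./2)%N, w = (a * i)%N, b = g ^+ j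
                & (a * i + j = x %[mod a * t.-1])%N].
Proof.
rewrite mem_Pset -p_pred; split.
- case/and3P => /mem_Wset [i i_range ->] /mem_Bset [j j_range ->].
  by rewrite -exprD (eq_prim_root_expr g_prim) => /eqP eq_x; exists i, j.
- case=> i [j [i_range j_range -> -> eq_x]].
  apply/and3P; split; [apply/mem_Wset; exists i | apply/mem_Bset; exists j |] => //.
  by rewrite -exprD (eq_prim_root_expr g_prim) eq_x.
Qed.

Lemma size_Pset_expr (x : nat) : size (Pset g a t (g ^+ x)) = low_residue a x.
Proof.
have : (0 < a * t.-1)%N by rewrite -p_pred (prim_order_gt0 g_prim).
rewrite muln_gt0 => /andP [a_gt0 T_gt0].
have half_lt_a : (a./2 < a)%N by rewrite -divn2 ltn_Pdiv.
have digits_x i j : (j < a)%N ->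
    (a * i + j = x %[mod a * t.-1])%N <-> (j = x %% a /\ i = x %/ a %[mod t.-1])%N.
  move=> j_lt_a; rewrite {1}(divn_eq x a) (mulnC _ a).
  split => [/eqP | [-> eq_i]]; last first.
    by apply/eqP; rewrite eqn_mod_digits ?ltn_mod // eq_i !eqxx.
  by rewrite eqn_mod_digits ?ltn_mod // => /andP [/eqP -> /eqP].
have uniq_Pset : uniq (Pset g a t (g ^+ x)) by apply: undup_uniq.
case: (boolP (low_residue a x)) => low_x.
- have [i0 i0_range i0_mod] := @exists_mod_rep t.-1 (x %/ a) T_gt0.
  suff /perm_size -> : perm_eq (Pset g a t (g ^+ x)) [:: ((a * i0)%N, g ^+ (x %% a))] by [].
  apply: uniq_perm => // -[w b]; rewrite inE; apply/idP/eqP.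
  + case/mem_Pset_expr => i [j [i_range j_range -> -> /digits_x]].
    case=> [|-> i_mod]; first lia.
    by rewrite (@eq_mod_rep t.-1 i i0) // i_mod i0_mod.
  + case=> -> ->; apply/mem_Pset_expr; exists i0, (x %% a)%N.
    by split => //; apply/digits_x; rewrite ?ltn_mod.
- suff /perm_size -> : perm_eq (Pset g a t (g ^+ x)) [::] by [].
  apply: uniq_perm => // -[w b]; apply/negP.
  case/mem_Pset_expr => i [j [_ j_range _ _ /digits_x]].
  by case=> [|j_eq _]; [lia | move: low_x; rewrite /low_residue -j_eq j_range].
Qed.

End PrimitiveRootExponents.

Lemma prim_root_half_eqN1 (R : idomainType) (n : nat) (z : R) :
  (n.*2).-primitive_root z -> z ^+ n = -1.
Proof.
move=> z_prim; have n_gt0 : (0 < n)%N by rewrite -double_gt0 (prim_order_gt0 z_prim).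
have : (z ^+ n) ^+ 2 == 1 by rewrite -exprM muln2 (prim_expr_order z_prim).
rewrite sqrf_eq1 => /orP [|/eqP //].
rewrite -(expr0 z) (eq_prim_root_expr z_prim) mod0n modn_small -?addnn; lia.
Qed.

Lemma expf_Fp_pred (p : nat) (x : 'F_p) : prime p -> x != 0 -> x ^+ p.-1 = 1.
Proof.
move=> p_prime x_nz; apply: (mulfI x_nz).
rewrite mulr1 -exprS prednK ?prime_gt0 //.
by have := expf_card x; rewrite card_Fp.
Qed.

Theorem lemma1 (t p a : nat) (g : 'F_p) :
  (2 <= t)%N -> ~~ odd t -> prime p -> (3 <= p)%N ->
  p.-1 = (a * t.-1)%N ->
  p.-1.-primitive_root g ->
  forall f : 'F_p, f != 0 ->
    let P := Pset g a t f in
    let N := Pset g a t (- f) in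
    ((size P = 0%N /\ size N = 1%N) \/ (size P = 1%N /\ size N = 0%N)) /\
    (size P <= 1)%N /\ (size N <= 1)%N.
Proof.
move=> t_ge2 t_even p_prime p_ge3 p_pred g_prim f f_nz P N.
have T_odd : odd t.-1 by move: t_ge2 t_even; case: (t) => //= t' _ /negPn.
have p_odd : odd p by case/even_prime: p_prime p_ge3 => [-> |].
have p_pred_even : ~~ odd p.-1 by rewrite -(prednK (prime_gt0 p_prime)) in p_odd.
have a_even : ~~ odd a by move: p_pred_even; rewrite p_pred oddM T_odd andbT.
have a_gt0 : (0 < a)%N by move: p_pred; case: (a) => //; rewrite mul0n; lia.
have [k f_eq] := prim_rootP g_prim (@expf_Fp_pred p f p_prime f_nz).
have half_pred : (p.-1./2 = a * t.-1./2 + a./2)%N.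
  by rewrite p_pred half_mul_even_odd.
have Nf_eq : - f = g ^+ (k + (a * t.-1./2 + a./2)).
  by rewrite f_eq exprD -half_pred (@prim_root_half_eqN1 _ p.-1./2) ?mulrN1 ?even_halfK.
rewrite /P /N Nf_eq f_eq !(@size_Pset_expr p a t g g_prim p_pred) low_residue_shift //.
by case: low_residue; auto.
Qed.
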